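(* Let $K$ be a field of characteristic $0$, let $S=K[x_1,\ldots,x_n]$ be graded by $\deg x_i=a_i>0$, and let $I,J\subsetneq S$ be graded ideals. Call a graded ideal $\mathfrak a\subset S$ strongly Golod if $\partial(\mathfrak a)^2\subseteq \mathfrak a$, where $\partial(\mathfrak a)$ is the ideal generated by all $\partial f/\partial x_i$ with $f\in\mathfrak a$, $1\le i\le n$. Then: (a) if $I$ and $J$ are strongly Golod, then $I\cap J$ and $IJ$ are strongly Golod; (b) if $I$ and $J$ are strongly Golod and $\partial(I)\partial(J)\subseteq I+J$, then $I+J$ is strongly Golod; (c) if $I$ is strongly Golod, $J$ is arbitrary, and $I:J=I:J^2$, then $I:J$ is strongly Golod; (d) $I^k$, $I^{(k)}$ and $\widetilde{I^k}$ are strongly Golod for all $k\ge 2$.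
   Context: Here $I^{(k)}=\bigcup_{t\ge1} I^k:L^t$, where $L$ is the intersection of all associated, non-minimal prime ideals of $I^k$ (the $k$-th symbolic power), and $\widetilde{I^k}=\bigcup_{t\ge1} I^k:\mathfrak m^t$ where $\mathfrak m=(x_1,\ldots,x_n)$ (the $k$-th saturated power). *)

From HB Require Import structures.
From mathcomp Require Import all_boot all_order all_algebra.
From mathcomp Require Import mpoly.

Set Implicit Arguments.
Unset Strict Implicit.
Unset Printing Implicit Defensive.

Import GRing.Theory.
Local Open Scope ring_scope.

Section Ideals.
Variables (K : fieldType) (n : nat).
Local Notation S := {mpoly K[n]}.

Definition subsetS (A B : S -> Prop) : Prop := forall f, A f -> B f.

Definition is_ideal (A : S -> Prop) : Prop :=
  [/\ A 0, (forall f g, A f -> A g -> A (f + g)) &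
      (forall r f, A f -> A (r * f))].

Definition proper_ideal (A : S -> Prop) : Prop := is_ideal A /\ ~ A 1.

Definition gen_ideal (P : S -> Prop) : S -> Prop := fun f =>
  exists (m : nat) (r g : nat -> S),
    (forall i, (i < m)%N -> P (g i)) /\ f = \sum_(i < m) r i * g i.

Definition idealI (A B : S -> Prop) : S -> Prop := fun f => A f /\ B f.
Definition idealD (A B : S -> Prop) : S -> Prop :=
  fun f => exists g h, [/\ A g, B h & f = g + h].
Definition idealM (A B : S -> Prop) : S -> Prop :=
  gen_ideal (fun f => exists g h, [/\ A g, B h & f = g * h]).
Definition idealC (A B : S -> Prop) : S -> Prop :=
  fun f => forall g, B g -> A (f * g).
Definition whole : S -> Prop := fun _ => True.
Fixpoint idealX (A : S -> Prop) (k : nat) : S -> Prop :=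
  if k is k'.+1 then idealM (idealX A k') A else whole.

Definition wdeg (a : 'I_n -> nat) (m : 'X_{1..n}) : nat := (\sum_(i < n) a i * m i)%N.
Definition wcomp (a : 'I_n -> nat) (d : nat) (f : S) : S :=
  \sum_(m <- msupp f | wdeg a m == d) f@_m *: 'X_[m].
Definition graded_ideal (a : 'I_n -> nat) (A : S -> Prop) : Prop :=
  is_ideal A /\ forall f d, A f -> A (wcomp a d f).

Definition pderiv_ideal (A : S -> Prop) : S -> Prop :=
  gen_ideal (fun g => exists f i, A f /\ g = mderiv i f).

Definition strongly_Golod (a : 'I_n -> nat) (A : S -> Prop) : Prop :=
  graded_ideal a A /\
  subsetS (idealM (pderiv_ideal A) (pderiv_ideal A)) A.

Definition prime_ideal (P : S -> Prop) : Prop :=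
  proper_ideal P /\ forall f g, P (f * g) -> P f \/ P g.
Definition assoc_prime (A P : S -> Prop) : Prop :=
  prime_ideal P /\ exists h : S, forall g, P g <-> A (g * h).
Definition minimal_prime (A P : S -> Prop) : Prop :=
  [/\ prime_ideal P, subsetS A P &
      forall Q, prime_ideal Q -> subsetS A Q -> subsetS Q P -> subsetS P Q].
Definition embedded_int (A : S -> Prop) : S -> Prop :=
  fun f => forall P, assoc_prime A P -> ~ minimal_prime A P -> P f.

Definition symbolic_power (I : S -> Prop) (k : nat) : S -> Prop :=
  fun f => exists t, (1 <= t)%N /\
    idealC (idealX I k) (idealX (embedded_int (idealX I k)) t) f.

Definition max_ideal : S -> Prop := gen_ideal (fun g => exists i : 'I_n, g = 'X_i).

Definition saturated_power (I : S -> Prop) (k : nat) : S -> Prop :=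
  fun f => exists t, (1 <= t)%N /\ idealC (idealX I k) (idealX max_ideal t) f.

End Ideals.

From HB Require Import structures.
From mathcomp Require Import all_boot all_order all_algebra.
From mathcomp Require Import mpoly ring zify.

(* Say that A is closed under derivative products when d_i f * d_j g lies in
   A for all f, g in A; for an ideal A this is the same as d(A)^2 <= A.  Each
   closure property is then a Leibniz-rule computation.  For IJ, the
   derivative of r g h is d(r) g h + h r d(g) + g r d(h), and every cross term
   in a product of two such derivatives has a factor in I and one in J.  For
   colon ideals, d(f u v) = d(f) u v modulo A whenever f u and f v lie in A,
   so d(f) d(h) multiplies J^4 (resp. L^(2s+2t)) into A whenever f and h
   multiply J (resp. L^s and L^t) into A; when I : J = I : J^2 this lands back
   in I : J.  For powers, d(I^(k+1)) <= I^k, so d(I^k)^2 <= I^(2k-2) <= I^k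
   once k >= 2.
   Gradedness of the symbolic power rests on associated primes of a graded
   ideal A being graded: if f h lies in A and p is the top component of f,
   then p^B h lies in A with B bounding the degrees of h, so p lies in the
   prime A : h, and one concludes by induction on f - p. *)

Set Implicit Arguments.
Unset Strict Implicit.
Unset Printing Implicit Defensive.

Import GRing.Theory.
Local Open Scope ring_scope.

Section WeightedComponents.
Variables (K : fieldType) (n : nat) (a : 'I_n -> nat).
Local Notation S := {mpoly K[n]}.
Implicit Types (f g h : S) (m : 'X_{1..n}).

Lemma mcoeff_wcomp d f m :
  (wcomp a d f)@_m = if wdeg a m == d then f@_m else 0.
Proof.
rewrite /wcomp raddf_sum /=.
under eq_bigr do rewrite mcoeffZ mcoeffX.
rewrite big_mkcond /=.
have [fm|fm] := boolP (m \in msupp f).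
  rewrite (bigD1_seq m) //= ?msupp_uniq // eqxx mulr1 big1 ?addr0 // => k km.
  by case: ifP => // _; rewrite (negPf km) mulr0.
rewrite big1_seq; first by rewrite (memN_msupp_eq0 fm); case: ifP.
move=> k /andP[_ fk]; case: ifP => // _.
by case: eqVneq => [km|]; [rewrite -km fk in fm|rewrite mulr0].
Qed.

Lemma wcompD d f g : wcomp a d (f + g) = wcomp a d f + wcomp a d g.
Proof.
by apply/mpolyP => m; rewrite mcoeffD !mcoeff_wcomp mcoeffD; case: ifP; rewrite ?addr0.
Qed.

Lemma wcomp0 d : wcomp a d (0 : S) = 0.
Proof. by apply/mpolyP => m; rewrite mcoeff_wcomp mcoeff0; case: ifP. Qed.

Lemma wcompB d f g : wcomp a d (f - g) = wcomp a d f - wcomp a d g.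
Proof.
by apply/mpolyP => m; rewrite mcoeffB !mcoeff_wcomp mcoeffB; case: ifP; rewrite ?subr0.
Qed.

Lemma wcomp_sum d (I : Type) (r : seq I) (P : pred I) (F : I -> S) :
  wcomp a d (\sum_(i <- r | P i) F i) = \sum_(i <- r | P i) wcomp a d (F i).
Proof. exact: (big_morph _ (wcompD d) (wcomp0 d)). Qed.

Lemma wcomp_mpolyX d m :
  wcomp a d ('X_[m] : S) = if wdeg a m == d then 'X_[m] else 0.
Proof.
apply/mpolyP => k; rewrite mcoeff_wcomp mcoeffX.
case: (eqVneq m k) => [->|km]; first by case: ifP; rewrite ?mcoeff0 ?mcoeffX ?eqxx.
by case: ifP; case: ifP; rewrite ?mcoeff0 ?mcoeffX ?(negPf km).
Qed.

Lemma wdegD m1 m2 : wdeg a (m1 + m2)%MM = (wdeg a m1 + wdeg a m2)%N.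
Proof. by rewrite /wdeg -big_split; apply: eq_bigr => i _; rewrite mnmDE mulnDr. Qed.

Definition whomog d f := wcomp a d f = f.

Lemma whomog_mcoeff d f m : whomog d f -> wdeg a m != d -> f@_m = 0.
Proof. by move=> fd md; rewrite -fd mcoeff_wcomp (negPf md). Qed.

Lemma whomog_wcomp d f : whomog d (wcomp a d f).
Proof. by apply/mpolyP => m; rewrite !mcoeff_wcomp; case: eqP. Qed.

Lemma wcomp_whomog d e f : whomog d f -> wcomp a e f = if e == d then f else 0.
Proof.
move=> fd; case: eqP => [->//|/eqP ed]; apply/mpolyP => m.
by rewrite mcoeff_wcomp mcoeff0; case: eqP => // me; apply: (whomog_mcoeff fd); rewrite me.
Qed.

Lemma whomogM d e f g : whomog d f -> whomog e g -> whomog (d + e) (f * g).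
Proof.
move=> fd ge; apply/mpolyP => m; rewrite mcoeff_wcomp; case: eqP => // /eqP mde.
rewrite mcoeffM big1 // => k /eqP mk.
have [k1d|k1d] := eqVneq (wdeg a k.1) d; last by rewrite (whomog_mcoeff fd k1d) mul0r.
have [k2e|k2e] := eqVneq (wdeg a k.2) e; last by rewrite (whomog_mcoeff ge k2e) mulr0.
by rewrite mk wdegD k1d k2e eqxx in mde.
Qed.

Definition wbound f := (\max_(m <- msupp f) (wdeg a m).+1)%N.

Lemma wdeg_lt_wbound f m : m \in msupp f -> (wdeg a m < wbound f)%N.
Proof. by move=> fm; rewrite /wbound (bigD1_seq m) ?msupp_uniq //= leq_max leqnn. Qed.

Lemma wcomp_wbound d f : (wbound f <= d)%N -> wcomp a d f = 0.
Proof.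
move=> fd; apply/mpolyP => m; rewrite mcoeff_wcomp mcoeff0; case: eqP => // md.
have [fm|] := boolP (m \in msupp f); last exact: memN_msupp_eq0.
by have := wdeg_lt_wbound fm; rewrite md ltnNge fd.
Qed.

Lemma wbound_le N f : (forall d, (N <= d)%N -> wcomp a d f = 0) -> (wbound f <= N)%N.
Proof.
move=> f0; apply/bigmax_leqP_seq => m fm _; rewrite ltnNge; apply/negP => Nm.
move/(congr1 (mcoeff m)): (f0 _ Nm); rewrite mcoeff_wcomp eqxx mcoeff0 => /eqP.
by rewrite mcoeff_eq0 fm.
Qed.

Lemma wcomp_decomp M f : (wbound f <= M)%N -> f = \sum_(0 <= d < M) wcomp a d f.
Proof.
move=> fM; apply/mpolyP => m; rewrite raddf_sum /=.
under eq_bigr do rewrite mcoeff_wcomp eq_sym.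
rewrite -big_mkcond big_nat1_eq /=.
have [fm|fm] := boolP (m \in msupp f); first by rewrite (leq_trans (wdeg_lt_wbound fm)).
by case: ifP; rewrite // (memN_msupp_eq0 fm).
Qed.

Lemma wcompM_whomog d e f g : whomog e g ->
  wcomp a d (f * g) = if (e <= d)%N then wcomp a (d - e) f * g else 0.
Proof.
move=> ge; rewrite {1}(@wcomp_decomp (maxn (wbound f) d.+1) f) ?leq_maxl //.
rewrite mulr_suml wcomp_sum.
under eq_bigr do rewrite (wcomp_whomog _ (whomogM (whomog_wcomp _ f) ge)).
case: leqP => [ed|de].
  rewrite (eq_bigr (fun x => if x == (d - e)%N then wcomp a x f * g else 0)).
    rewrite -big_mkcond big_nat1_eq /= ifT //.
    by rewrite (leq_trans _ (leq_maxr _ _)) // ltnS leq_subr.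
  by move=> x _; congr (if _ then _ else _); apply/eqP/eqP => [->|->]; rewrite ?addnK ?subnK.
by rewrite big1 // => x _; case: eqP => // dx; move: de; rewrite dx ltnNge leq_addl.
Qed.

End WeightedComponents.

Section IdealAlgebra.
Variables (K : fieldType) (n : nat).
Local Notation S := {mpoly K[n]}.
Implicit Types (f g h x y : S) (A B C L P : S -> Prop).

Lemma ideal_0 A : is_ideal A -> A 0. Proof. by case. Qed.

Lemma ideal_add A f g : is_ideal A -> A f -> A g -> A (f + g).
Proof. by case=> _ + _; apply. Qed.

Lemma ideal_mull A r f : is_ideal A -> A f -> A (r * f).
Proof. by case=> _ _; apply. Qed.

Lemma ideal_mulr A r f : is_ideal A -> A f -> A (f * r).
Proof. by rewrite mulrC; apply: ideal_mull. Qed.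

Lemma ideal_sub A f g : is_ideal A -> A f -> A g -> A (f - g).
Proof. by move=> IA Af Ag; rewrite -mulN1r; apply: ideal_add => //; apply: ideal_mull. Qed.

Lemma ideal_sum A (I : Type) (r : seq I) (P : pred I) (F : I -> S) :
  is_ideal A -> (forall i, P i -> A (F i)) -> A (\sum_(i <- r | P i) F i).
Proof. by move=> IA AF; apply: (big_ind A (ideal_0 IA)) => // x y; apply: ideal_add. Qed.

Lemma is_ideal_gen P : is_ideal (gen_ideal P).
Proof.
split.
- by exists 0%N, (fun=> 0), (fun=> 0); rewrite big_ord0.
- move=> _ _ [m1 [r1 [g1 [P1 ->]]]] [m2 [r2 [g2 [P2 ->]]]].
  exists (m1 + m2)%N, (fun i => if (i < m1)%N then r1 i else r2 (i - m1)%N),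
    (fun i => if (i < m1)%N then g1 i else g2 (i - m1)%N); split.
    move=> i im; case: ifPn => [|/negbTE i1]; first exact: P1.
    by apply: P2; rewrite ltn_subLR // leqNgt i1.
  rewrite big_split_ord /=; congr (_ + _); apply: eq_bigr => i _ /=.
    by rewrite ltn_ord.
  by rewrite ltnNge leq_addr /= addKn.
- move=> r _ [m [r1 [g1 [P1 ->]]]]; exists m, (fun i => r * r1 i), g1; split => //.
  by rewrite mulr_sumr; apply: eq_bigr => i _; rewrite mulrA.
Qed.

Lemma gen_ideal_sub P f : P f -> gen_ideal P f.
Proof. by exists 1%N, (fun=> 1), (fun=> f); rewrite big_ord1 mul1r. Qed.

Lemma gen_ideal_min P B : is_ideal B -> subsetS P B -> subsetS (gen_ideal P) B.
Proof.
move=> IB PB _ [m [r [g [Pg ->]]]]; apply: ideal_sum => // i _.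
by apply: ideal_mull => //; apply/PB/Pg.
Qed.

Lemma is_ideal_idealM A B : is_ideal (idealM A B). Proof. exact: is_ideal_gen. Qed.

Lemma idealM_mul A B g h : A g -> B h -> idealM A B (g * h).
Proof. by move=> Ag Bh; apply: gen_ideal_sub; exists g, h. Qed.

Lemma idealM_min A B C : is_ideal C -> (forall g h, A g -> B h -> C (g * h)) ->
  subsetS (idealM A B) C.
Proof. by move=> IC ABC; apply: gen_ideal_min => // f [g [h [Ag Bh ->]]]; apply: ABC. Qed.

Lemma is_ideal_idealX A k : is_ideal (idealX A k).
Proof. by case: k => [|k] /=; [|exact: is_ideal_idealM]. Qed.

Lemma is_ideal_idealI A B : is_ideal A -> is_ideal B -> is_ideal (idealI A B).
Proof.
move=> IA IB; split; first by split; apply: ideal_0.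
- by move=> f g [? ?] [? ?]; split; apply: ideal_add.
- by move=> r f [? ?]; split; apply: ideal_mull.
Qed.

Lemma is_ideal_idealD A B : is_ideal A -> is_ideal B -> is_ideal (idealD A B).
Proof.
move=> IA IB; split.
- by exists 0, 0; rewrite addr0; split => //; apply: ideal_0.
- move=> _ _ [f1 [f2 [A1 B2 ->]]] [g1 [g2 [A3 B4 ->]]].
  by exists (f1 + g1), (f2 + g2); split; [exact: ideal_add|exact: ideal_add|exact: addrACA].
- move=> r _ [f1 [f2 [A1 B2 ->]]].
  by exists (r * f1), (r * f2); split; [exact: ideal_mull|exact: ideal_mull|exact: mulrDr].
Qed.

Lemma idealD_l A B f : is_ideal B -> A f -> idealD A B f.
Proof. by exists f, 0; split; rewrite ?addr0 //; apply: ideal_0. Qed.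

Lemma idealD_r A B f : is_ideal A -> B f -> idealD A B f.
Proof. by exists 0, f; split; rewrite ?add0r //; apply: ideal_0. Qed.

Lemma is_ideal_idealC A B : is_ideal A -> is_ideal (idealC A B).
Proof.
move=> IA; split.
- by move=> g _; rewrite mul0r; apply: ideal_0.
- by move=> f g Af Ag h Bh; rewrite mulrDl; apply: ideal_add => //; [apply: Af|apply: Ag].
- by move=> r f Af h Bh; rewrite -mulrA; apply: ideal_mull => //; apply: Af.
Qed.

Lemma is_ideal_colon_elt A x : is_ideal A -> is_ideal (fun y => A (x * y)).
Proof.
move=> IA; split; first by rewrite mulr0; apply: ideal_0.
  by move=> f g *; rewrite mulrDr; apply: ideal_add.
by move=> r f *; rewrite mulrCA; apply: ideal_mull.
Qed.

Lemma idealX1 A : is_ideal A -> forall f, idealX A 1 f <-> A f.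
Proof.
move=> IA f; split; last by move=> Af; rewrite -[f]mul1r; exact: (@idealM_mul (@whole K n) A).
by apply: idealM_min => // g h _ Ah; apply: ideal_mull.
Qed.

Lemma idealX_mul A k l x y : idealX A k x -> idealX A l y -> idealX A (k + l) (x * y).
Proof.
elim: l y => [|l IHl] y Ax Ay; first by rewrite addn0; apply: ideal_mulr => //; apply: is_ideal_idealX.
rewrite addnS; apply: (idealM_min (is_ideal_colon_elt x (is_ideal_idealM _ _)) _ Ay).
by move=> p q Ap Aq; rewrite mulrA; apply: idealM_mul => //; apply: IHl.
Qed.

Lemma idealX_anti A k l : (k <= l)%N -> subsetS (idealX A l) (idealX A k).
Proof.
move/subnK <-; elim: (l - k)%N => [//|d IHd] f /=.
apply: idealM_min; first exact: is_ideal_idealX.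
by move=> g h Ag _; apply: ideal_mulr; [exact: is_ideal_idealX|exact: IHd].
Qed.

Lemma idealC_idealXD A L k l x : is_ideal A ->
  (forall u v, idealX L k u -> idealX L l v -> A (x * (u * v))) ->
  idealC A (idealX L (k + l)) x.
Proof.
move=> IA; elim: l x => [|l IHl] x Ax y.
  by rewrite addn0 => Ly; move: (Ax y 1 Ly I); rewrite mulr1.
rewrite addnS; apply: (idealM_min (is_ideal_colon_elt x IA)) => p q Lp Lq.
rewrite mulrA mulrAC; apply: IHl => // u v Lu Lv.
rewrite (_ : x * q * (u * v) = x * (u * (v * q))); last by ring.
by apply: Ax => //; apply: idealM_mul.
Qed.

End IdealAlgebra.

Section GradedIdeals.
Variables (K : fieldType) (n : nat) (a : 'I_n -> nat).
Local Notation S := {mpoly K[n]}.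
Implicit Types (f g h : S) (A B C P : S -> Prop).

Lemma wcompM_mem C d g h : is_ideal C ->
  (forall x y, C (wcomp a x g * wcomp a y h)) -> C (wcomp a d (g * h)).
Proof.
move=> IC Cgh; rewrite (wcomp_decomp (leqnn (wbound a h))) mulr_sumr wcomp_sum.
apply: ideal_sum => // y _; rewrite (wcompM_whomog _ _ (whomog_wcomp a y h)).
by case: ifP => _; [exact: Cgh|exact: ideal_0].
Qed.

Lemma graded_gen P : (forall p d, P p -> gen_ideal P (wcomp a d p)) ->
  graded_ideal a (gen_ideal P).
Proof.
move=> Pd; split=> [|_ d [m [r [g [Pg ->]]]]]; first exact: is_ideal_gen.
rewrite wcomp_sum; apply: ideal_sum => [|i _]; first exact: is_ideal_gen.
apply: wcompM_mem => [|x y]; first exact: is_ideal_gen.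
by apply: ideal_mull; [exact: is_ideal_gen|exact/Pd/Pg].
Qed.

Lemma graded_idealM A B : graded_ideal a A -> graded_ideal a B -> graded_ideal a (idealM A B).
Proof.
move=> [_ GA] [_ GB]; apply: graded_gen => _ d [g [h [Ag Bh ->]]].
apply: wcompM_mem => [|x y]; first exact: is_ideal_gen.
by apply: idealM_mul; [exact: GA|exact: GB].
Qed.

Lemma graded_idealX A k : graded_ideal a A -> graded_ideal a (idealX A k).
Proof. by move=> GA; elim: k => [|k IHk] //=; apply: graded_idealM. Qed.

Lemma graded_idealI A B : graded_ideal a A -> graded_ideal a B -> graded_ideal a (idealI A B).
Proof.
move=> [IA GA] [IB GB]; split; first exact: is_ideal_idealI.
by move=> f d [Af Bf]; split; [exact: GA|exact: GB].
Qed.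

Lemma graded_idealD A B : graded_ideal a A -> graded_ideal a B -> graded_ideal a (idealD A B).
Proof.
move=> [IA GA] [IB GB]; split; first exact: is_ideal_idealD.
move=> _ d [g [h [Ag Bh ->]]].
by exists (wcomp a d g), (wcomp a d h); split; [exact: GA|exact: GB|exact: wcompD].
Qed.

Lemma graded_idealC A B : graded_ideal a A -> graded_ideal a B -> graded_ideal a (idealC A B).
Proof.
move=> [IA GA] [IB GB]; split; first exact: is_ideal_idealC.
move=> f d Af h Bh; rewrite (wcomp_decomp (leqnn (wbound a h))) mulr_sumr.
apply: ideal_sum => // y _.
have := wcompM_whomog (d + y) f (whomog_wcomp a y h); rewrite leq_addl addnK => <-.
by apply/GA/Af/GB.
Qed.

Lemma graded_max_ideal : graded_ideal a (@max_ideal K n).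
Proof.
apply: graded_gen => _ d [i ->]; rewrite wcomp_mpolyX.
by case: ifP => _; [apply: gen_ideal_sub; exists i|exact: ideal_0 (is_ideal_gen _)].
Qed.

End GradedIdeals.

Section AssociatedPrimes.
Variables (K : fieldType) (n : nat) (a : 'I_n -> nat).
Local Notation S := {mpoly K[n]}.
Implicit Types (f g h p : S) (A P : S -> Prop).

Lemma prime_ideal_radical P x k : prime_ideal P -> P (x ^+ k) -> P x.
Proof.
move=> [[_ P1] PM]; elim: k => [|k IHk]; first by rewrite expr0 => /P1.
by rewrite exprS => /PM [|/IHk].
Qed.

Section TopComponent.
Variables (A : S -> Prop) (p g h : S) (N : nat).
Hypotheses (GA : graded_ideal a A) (pN : whomog a N p) (gN : (wbound a g <= N)%N).
Hypothesis Ah : A ((p + g) * h).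
Local Notation B := (wbound a h).

(* Compare the components of degree [N + e] in [(p + g) * h]: the term
   [p * wcomp a e h] is the only one not already controlled by the
   components [wcomp a y h] with [y > e]. *)
Lemma top_wcomp_colon_step e :
  (forall y, (e < y)%N -> A (p ^+ (B - y) * wcomp a y h)) ->
  A (p ^+ (B - e) * wcomp a e h).
Proof.
have [IA GA'] := GA.
move=> IHe; have [Be|eB] := leqP B e; first by rewrite wcomp_wbound ?mulr0 //; exact: ideal_0.
set T := wcomp a (N + e) (g * h).
have ApT : A (p ^+ (B - e).-1 * T).
  rewrite /T [X in g * X](wcomp_decomp (leqnn B)) [g * _]mulr_sumr wcomp_sum mulr_sumr.
  apply: ideal_sum => // y _; rewrite (wcompM_whomog _ _ (whomog_wcomp a y h)).
  case: ifP => [yNe|_]; last by rewrite mulr0; exact: ideal_0.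
  have [ye|ey] := leqP y e.
    by rewrite wcomp_wbound ?mul0r ?mulr0; [exact: ideal_0|lia].
  have [By|yB] := leqP B y; first by rewrite (wcomp_wbound By) !mulr0; exact: ideal_0.
  rewrite -(subnKC (_ : B - y <= (B - e).-1)%N); last by lia.
  rewrite exprD -mulrA mulrCA [p ^+ (B - y) * _]mulrCA.
  by do 2 apply: ideal_mull => //; exact: IHe.
have AeT : A (p ^+ (B - e).-1 * (wcomp a e h * p + T)).
  apply: ideal_mull => //; move: (GA' _ (N + e)%N Ah).
  by rewrite mulrDl wcompD mulrC (wcompM_whomog _ _ pN) leq_addr addKn.
rewrite -(prednK (_ : 0 < B - e)%N); last by lia.
rewrite exprSr -mulrA [p * _]mulrC -[X in A X](addrK (p ^+ (B - e).-1 * T)) -mulrDr.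
exact: ideal_sub.
Qed.

Lemma top_wcomp_colon : A (p ^+ B * h).
Proof.
have [IA _] := GA.
have comp e : A (p ^+ (B - e) * wcomp a e h).
  suff: forall k e, (B - e <= k)%N -> A (p ^+ (B - e) * wcomp a e h) by apply.
  elim=> [|k IHk] {}e ek; apply: top_wcomp_colon_step => y ey.
    by rewrite wcomp_wbound ?mulr0; [exact: ideal_0|lia].
  by apply: IHk; lia.
rewrite [X in _ * X](wcomp_decomp (leqnn B)) mulr_sumr big_nat_cond.
apply: ideal_sum => // e /andP[/andP[_ eB] _].
by rewrite -(subnKC (ltnW eB)) exprD -mulrA; apply: ideal_mull.
Qed.

End TopComponent.

Lemma graded_assoc_prime A P : graded_ideal a A -> assoc_prime A P -> graded_ideal a P.
Proof.
move=> GA [PP [h Ph]]; have IP := proj1 (proj1 PP); split => //.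
suff comp N f : P f -> (wbound a f <= N)%N -> forall d, P (wcomp a d f).
  by move=> f d Pf; apply: comp (leqnn _) d.
elim: N f => [|N IHN] f Pf fN d.
  by rewrite (wcomp_wbound (leq_trans fN (leq0n d))); exact: ideal_0.
set p := wcomp a N f; set g := f - p.
have pN : whomog a N p by exact: whomog_wcomp.
have gN : (wbound a g <= N)%N.
  apply: wbound_le => x Nx; rewrite wcompB (wcomp_whomog _ pN).
  case: eqP => [->|/eqP xN]; first by rewrite subrr.
  by rewrite wcomp_wbound ?subr0 //; apply: leq_trans fN _; rewrite ltn_neqAle eq_sym xN.
have Pp : P p.
  apply: (prime_ideal_radical (k := wbound a h) PP); apply/Ph.
  by apply: top_wcomp_colon gN _ => //; rewrite addrC subrK; apply/Ph.
have -> : wcomp a d f = wcomp a d g + wcomp a d p by rewrite -wcompD subrK.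
apply: ideal_add => //; first by apply: (IHN g _ gN); exact: ideal_sub.
by rewrite (wcomp_whomog _ pN); case: ifP => _ //; exact: ideal_0.
Qed.

Lemma graded_embedded_int A : graded_ideal a A -> graded_ideal a (embedded_int A).
Proof.
move=> GA; have IP P : assoc_prime A P -> is_ideal P by case=> [[[]]].
split; first split.
- by move=> P /IP /ideal_0.
- by move=> f g Af Ag P AP nP; apply: ideal_add (IP _ AP) (Af _ AP nP) (Ag _ AP nP).
- by move=> r f Af P AP nP; apply: ideal_mull (IP _ AP) (Af _ AP nP).
by move=> f d Af P AP nP; have [_ GP] := graded_assoc_prime GA AP; exact: GP _ _ (Af _ AP nP).
Qed.

End AssociatedPrimes.

Section StronglyGolod.
Variables (K : fieldType) (n : nat) (a : 'I_n -> nat).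
Local Notation S := {mpoly K[n]}.
Implicit Types (f g h u v x : S) (A I J L P : S -> Prop).

Definition pderivM_closed A :=
  forall f g i j, A f -> A g -> A (f^`M(i) * g^`M(j)).

Lemma strongly_GolodE A :
  strongly_Golod a A <-> graded_ideal a A /\ pderivM_closed A.
Proof.
split=> [[GA DA]|[GA cA]].
  split=> // f g i j Af Ag.
  by apply/DA/idealM_mul; apply: gen_ideal_sub; [exists f, i|exists g, j].
have IA := proj1 GA; split=> //.
apply: idealM_min => // x y Dx; move: x Dx y.
apply: gen_ideal_min; first exact: is_ideal_idealC.
move=> _ [f [i [Af ->]]]; apply: gen_ideal_min; first exact: is_ideal_colon_elt.
by move=> _ [g [j [Ag ->]]]; exact: cA.
Qed.

Lemma pderivM_closed_idealI I J :
  pderivM_closed I -> pderivM_closed J -> pderivM_closed (idealI I J).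
Proof. by move=> cI cJ f g i j [If Jf] [Ig Jg]; split; [exact: cI|exact: cJ]. Qed.

Lemma pderivM_gen P C f g i j : is_ideal C ->
  (forall r s p q, P p -> P q -> C ((r * p)^`M(i) * (s * q)^`M(j))) ->
  gen_ideal P f -> gen_ideal P g -> C (f^`M(i) * g^`M(j)).
Proof.
move=> IC CP [m [r [p [Pp ->]]]] [m' [s [q [Pq ->]]]].
rewrite !raddf_sum mulr_suml; apply: ideal_sum => // k _.
by rewrite mulr_sumr; apply: ideal_sum => // l _; apply: CP; [exact: Pp|exact: Pq].
Qed.

Lemma pderivM_closed_idealM I J : is_ideal I -> is_ideal J ->
  pderivM_closed I -> pderivM_closed J -> pderivM_closed (idealM I J).
Proof.
move=> II IJ cI cJ f f' i j; apply: pderivM_gen; first exact: is_ideal_idealM.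
move=> r s _ _ [g [h [Ig Jh ->]]] [g' [h' [Ig' Jh' ->]]].
have IIJ := is_ideal_idealM I J.
have mulIJ c x y : I x -> J y -> idealM I J (c * x * y).
  by move=> Ix Jy; rewrite -mulrA; exact: ideal_mull IIJ (idealM_mul Ix Jy).
have mderiv_gen k r0 g0 h0 : (r0 * (g0 * h0))^`M(k) =
    r0^`M(k) * (g0 * h0) + (h0 * (r0 * g0^`M(k)) + g0 * (r0 * h0^`M(k))).
  by rewrite !mderivM; ring.
rewrite !mderiv_gen mulrDl; apply: ideal_add => //.
  by rewrite -mulrA; apply: ideal_mull => //; apply: ideal_mulr => //; exact: idealM_mul.
rewrite mulrDr; apply: ideal_add => //.
  by rewrite mulrCA; do 2 apply: ideal_mull => //; exact: idealM_mul.
(* each cross term is written as [c * x * y] with [x] in [I] and [y] in [J] *)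
rewrite (_ : (_ + _) * (_ + _) = r * s * (g^`M(i) * g'^`M(j)) * (h * h')
    + r * s * g^`M(i) * h'^`M(j) * g' * h + r * s * h^`M(i) * g'^`M(j) * g * h'
    + r * s * g' * g * (h^`M(i) * h'^`M(j))); last by ring.
by do 3 ?apply: ideal_add => //; apply: mulIJ => //;
   [exact: cI|exact: ideal_mull|exact: cJ].
Qed.

Lemma pderivM_closed_idealD I J : is_ideal I -> is_ideal J ->
  pderivM_closed I -> pderivM_closed J ->
  subsetS (idealM (pderiv_ideal I) (pderiv_ideal J)) (idealD I J) ->
  pderivM_closed (idealD I J).
Proof.
move=> II IJ cI cJ DIJ _ _ i j [f [g [If Jg ->]]] [f' [g' [If' Jg' ->]]].
have IIJ := is_ideal_idealD II IJ.
have mixed u v k l : I u -> J v -> idealD I J (u^`M(k) * v^`M(l)).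
  by move=> Iu Jv; apply/DIJ/idealM_mul; apply: gen_ideal_sub; [exists u, k|exists v, l].
rewrite !mderivD !mulrDl !mulrDr; do 2 apply: ideal_add => //.
- by apply: idealD_l IJ _; exact: cI.
- exact: mixed.
- by rewrite mulrC; exact: mixed.
- by apply: idealD_r II _; exact: cJ.
Qed.

Lemma mderiv_mulr_colon A f u v i : is_ideal A -> A (f * u) -> A (f * v) ->
  A ((f * (u * v))^`M(i) - f^`M(i) * (u * v)).
Proof.
move=> IA Afu Afv; rewrite (_ : _ - _ = f * v * u^`M(i) + f * u * v^`M(i)).
  by apply: ideal_add => //; exact: ideal_mulr.
by rewrite !mderivM; ring.
Qed.

Lemma pderivM_colon4 A f h u1 u2 v1 v2 i j : is_ideal A -> pderivM_closed A ->
  A (f * u1) -> A (f * u2) -> A (h * v1) -> A (h * v2) ->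
  A (f^`M(i) * h^`M(j) * (u1 * u2 * (v1 * v2))).
Proof.
move=> IA cA Afu1 Afu2 Ahv1 Ahv2.
have Afu : A (f * (u1 * u2)) by rewrite mulrA; exact: ideal_mulr.
have Ahv : A (h * (v1 * v2)) by rewrite mulrA; exact: ideal_mulr.
pose D := (f * (u1 * u2))^`M(i); pose D' := (h * (v1 * v2))^`M(j).
have AD : A (D - f^`M(i) * (u1 * u2)) by exact: mderiv_mulr_colon.
have AD' : A (D' - h^`M(j) * (v1 * v2)) by exact: mderiv_mulr_colon.
rewrite (_ : _ * _ = D * D' - ((D - f^`M(i) * (u1 * u2)) * D'
    + f^`M(i) * (u1 * u2) * (D' - h^`M(j) * (v1 * v2)))); last by ring.
apply: ideal_sub => //; first exact: cA.
by apply: ideal_add => //; [exact: ideal_mulr|exact: ideal_mull].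
Qed.

Lemma pderivM_idealC A L s t f h i j : is_ideal A -> pderivM_closed A ->
  idealC A (idealX L s) f -> idealC A (idealX L t) h ->
  idealC A (idealX L (s + s + (t + t))) (f^`M(i) * h^`M(j)).
Proof.
move=> IA cA Af Ah; set x := _ * _.
have colon_s v1 v2 : idealX L t v1 -> idealX L t v2 ->
    idealC A (idealX L (s + s)) (x * (v1 * v2)).
  move=> Lv1 Lv2; apply: idealC_idealXD => // u1 u2 Lu1 Lu2.
  rewrite -mulrA [_ * (u1 * u2)]mulrC.
  by apply: pderivM_colon4 => //; [exact: Af|exact: Af|exact: Ah|exact: Ah].
apply: idealC_idealXD => // u v Lu Lv.
rewrite mulrA; move: v Lv; apply: idealC_idealXD => // v1 v2 Lv1 Lv2.
by rewrite mulrAC; exact: colon_s.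
Qed.

Lemma idealC_idealX_stable I J : is_ideal I -> is_ideal J ->
  (forall f, idealC I J f <-> idealC I (idealX J 2) f) ->
  forall k, subsetS (idealC I (idealX J k.+1)) (idealC I J).
Proof.
move=> II IJ IJ2; elim=> [|k IHk] f IJf.
  by move=> g Jg; apply: IJf; apply/(idealX1 IJ).
apply/IJ2; rewrite -[2%N]/(1 + 1)%N.
apply: idealC_idealXD => // u v /(idealX1 IJ) Ju /(idealX1 IJ) Jv.
have /IHk : idealC I (idealX J k.+1) (f * v).
  by move=> w Jw; rewrite -mulrA [v * w]mulrC; apply: IJf; exact: idealM_mul.
by move/(_ _ Ju); rewrite mulrAC -mulrA.
Qed.

Lemma pderivM_closed_idealC I J : is_ideal I -> is_ideal J -> pderivM_closed I ->
  (forall f, idealC I J f <-> idealC I (idealX J 2) f) -> pderivM_closed (idealC I J).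
Proof.
move=> II IJ cI IJ2 f h i j If Ih; apply: (idealC_idealX_stable II IJ IJ2 (k := 3)).
have IJ1 g : idealC I J g -> idealC I (idealX J 1) g by move=> Ig u /(idealX1 IJ) Ju; exact: Ig.
exact: pderivM_idealC II cI (IJ1 _ If) (IJ1 _ Ih).
Qed.

Lemma mderiv_idealX I k f i : is_ideal I -> idealX I k.+1 f -> idealX I k (f^`M(i)).
Proof.
move=> II; elim: k f => [//|k IHk] _ [m [r [g [Ig ->]]]].
have IIk := is_ideal_idealX I k.+1.
rewrite (big_morph _ (mderivD i) (mderiv0 _ i)); apply: ideal_sum => // l _.
have [u [v [Iu Iv ->]]] := Ig l (ltn_ord l); rewrite !mderivM.
apply: ideal_add => //.
  by apply: ideal_mull => //; apply: (@idealX_anti _ _ I k.+1 k.+2) => //; exact: idealM_mul.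
apply: ideal_mull => //; apply: ideal_add => //; last exact: ideal_mulr.
by rewrite -addn1; apply: idealX_mul (IHk _ Iu) (proj2 (idealX1 II v) Iv).
Qed.

Lemma pderivM_closed_idealX I k : is_ideal I -> (2 <= k)%N -> pderivM_closed (idealX I k).
Proof.
move=> II; case: k => // k k2 f g i j If Ig.
apply: (@idealX_anti _ _ _ _ (k + k)); first by lia.
by apply: idealX_mul; exact: mderiv_idealX.
Qed.

Definition saturation A L : S -> Prop :=
  fun f => exists t, (1 <= t)%N /\ idealC A (idealX L t) f.

Lemma idealC_idealX_mono A L s t : (s <= t)%N ->
  subsetS (idealC A (idealX L s)) (idealC A (idealX L t)).
Proof. by move=> st f Af g Lg; apply/Af/(idealX_anti st). Qed.

Lemma graded_saturation A L : graded_ideal a A -> graded_ideal a L ->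
  graded_ideal a (saturation A L).
Proof.
move=> GA GL; have IA := proj1 GA; split; first split.
- by exists 1%N; split => //; exact: ideal_0 (is_ideal_idealC _ IA).
- move=> f g [s [s1 Af]] [t [t1 Ag]]; exists (s + t)%N; split; first by lia.
  apply: ideal_add (is_ideal_idealC _ IA) _ _.
    by apply: idealC_idealX_mono Af; rewrite leq_addr.
  by apply: idealC_idealX_mono Ag; rewrite leq_addl.
- by move=> r f [t [t1 Af]]; exists t; split => //; exact: ideal_mull (is_ideal_idealC _ IA) Af.
move=> f d [t [t1 Af]]; exists t; split => //.
have [_ GC] := graded_idealC GA (graded_idealX t GL); exact: GC.
Qed.

Lemma pderivM_closed_saturation A L : is_ideal A -> pderivM_closed A ->
  pderivM_closed (saturation A L).
Proof.
move=> IA cA f h i j [s [s1 Af]] [t [t1 Ah]].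
by exists (s + s + (t + t))%N; split; [lia|exact: pderivM_idealC].
Qed.

End StronglyGolod.

Theorem theorem2p1 (K : fieldType) (n : nat) (a : 'I_n -> nat)
  (I J : {mpoly K[n]} -> Prop) :
  [pchar K] =i pred0 ->
  (forall i, (0 < a i)%N) ->
  graded_ideal a I -> ~ I 1 ->
  graded_ideal a J -> ~ J 1 ->
  [/\ (strongly_Golod a I -> strongly_Golod a J ->
         strongly_Golod a (idealI I J) /\ strongly_Golod a (idealM I J)),
      (strongly_Golod a I -> strongly_Golod a J ->
         subsetS (idealM (pderiv_ideal I) (pderiv_ideal J)) (idealD I J) ->
         strongly_Golod a (idealD I J)),
      (strongly_Golod a I ->
         (forall f, idealC I J f <-> idealC I (idealX J 2) f) ->
         strongly_Golod a (idealC I J)) &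
      (forall k, (2 <= k)%N ->
         [/\ strongly_Golod a (idealX I k),
             strongly_Golod a (symbolic_power I k) &
             strongly_Golod a (saturated_power I k)])].
Proof.
(* None of the arguments needs characteristic 0, positive weights or properness. *)
move=> _ _ GI _ GJ _; have [II IJ] := (proj1 GI, proj1 GJ).
split.
- move=> /strongly_GolodE[_ cI] /strongly_GolodE[_ cJ]; split; apply/strongly_GolodE.
    by split; [exact: graded_idealI|exact: pderivM_closed_idealI].
  by split; [exact: graded_idealM|exact: pderivM_closed_idealM].
- move=> /strongly_GolodE[_ cI] /strongly_GolodE[_ cJ] DIJ; apply/strongly_GolodE.
  by split; [exact: graded_idealD|exact: pderivM_closed_idealD].
- move=> /strongly_GolodE[_ cI] IJ2; apply/strongly_GolodE.
  by split; [exact: graded_idealC|exact: pderivM_closed_idealC].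
- move=> k k2; have GIk := graded_idealX k GI.
  have cIk := pderivM_closed_idealX II k2.
  have sat L : graded_ideal a L -> strongly_Golod a (saturation (idealX I k) L).
    move=> GL; apply/strongly_GolodE; split; first exact: graded_saturation.
    exact: pderivM_closed_saturation (proj1 GIk) cIk.
  split; first by apply/strongly_GolodE.
    exact/sat/graded_embedded_int.
  exact/sat/graded_max_ideal.
Qed.
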